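(* Let $\mathbb{R}^n$ be endowed with the Euclidean norm $\|\cdot\|_2$, let $A\in\mathbb{R}^{m\times n}$ have at least two different columns, and let $f:\mathbb{R}^m\to\mathbb{R}\cup\{\infty\}$ be a differentiable convex function with $\mathrm{conv}(A)\subseteq\mathrm{dom}(f)$ and $\frac{L_{f,A}}{\mu^\star_{f,A}}<\infty$. Let $x_0\in\Delta_{n-1}$ and for $k=0,1,\dots$ let \[ x_{k+1}=\operatorname*{argmin}_{x\in\Delta_{n-1}}\left\{f(Ax_k)+\langle\nabla f(Ax_k),A(x-x_k)\rangle+\frac{L_{f,A}}{2}\|x-x_k\|_2^2\right\}. \] Then for all $k\ge0$ \[ f(Ax_k)-f^\star\le\left(1-\min\left\{\frac{\mu^\star_{f,A}}{4L_{f,A}},\frac12\right\}\right)^k(f(Ax_0)-f^\star). \]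
   Context: $\Delta_{n-1}=\{x\in\mathbb{R}^n_+:\sum_ix_i=1\}$, $\mathrm{conv}(A)=\{Ax:x\in\Delta_{n-1}\}$. For $u\in\mathrm{conv}(A)$, $Z(u)=\{z\in\Delta_{n-1}:Az=u\}$, $\mathrm{dist}(x,Z(u))=\min_{z\in Z(u)}\|x-z\|_2$, and $L_{f,A}=\sup_{u\in\mathrm{conv}(A),\,x\in\Delta_{n-1}\setminus Z(u)}\frac{2(f(Ax)-f(u)-\langle\nabla f(u),Ax-u\rangle)}{\mathrm{dist}(x,Z(u))^2}$. $f^\star=\min_{x\in\Delta_{n-1}}f(Ax)$, $Z^\star=\{z\in\Delta_{n-1}:f(Az)=f^\star\}$, and $\mu^\star_{f,A}=\inf_{x\in\Delta_{n-1}\setminus Z^\star}\frac{2(f(Ax)-f^\star)}{\mathrm{dist}(x,Z^\star)^2}$ with $\mathrm{dist}(x,Z^\star)=\min_{z\in Z^\star}\|x-z\|_2$. *)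

From HB Require Import structures.
From mathcomp Require Import all_boot all_order all_algebra.
From mathcomp Require Import all_classical all_reals all_analysis.
Unset Printing Implicit Defensive.
Import Order.TTheory GRing.Theory Num.Theory.
Import numFieldNormedType.Exports.
Local Open Scope classical_set_scope.
Local Open Scope ring_scope.


Definition stdsimplex {R : realType} (n : nat) : set 'cV[R]_n :=
  [set x | (forall i, 0 <= x i 0) /\ \sum_i x i 0 = 1].

Definition convcols {R : realType} {m n : nat} (A : 'M[R]_(m, n)) : set 'cV[R]_m :=
  [set u | exists2 x, stdsimplex n x & A *m x = u].

Definition Zfiber {R : realType} {m n : nat} (A : 'M[R]_(m, n)) (u : 'cV[R]_m) : set 'cV[R]_n :=
  [set z | stdsimplex n z /\ A *m z = u].

Definition eucl_norm {R : realType} {n : nat} (x : 'cV[R]_n) : R :=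
  Num.sqrt (\sum_i (x i 0) ^+ 2).

(* dist(x, S) = min_{z in S} ||x - z||_2  (written as an infimum; the
   minimum is attained for the closed nonempty sets used below) *)
Definition eucl_dist {R : realType} {n : nat} (x : 'cV[R]_n) (S : set 'cV[R]_n) : R :=
  inf [set d | exists2 z, S z & d = eucl_norm (x - z)].

Definition freal {R : realType} {m : nat} (f : 'cV[R]_m -> \bar R) : 'cV[R]_m -> R :=
  fun v => fine (f v).

Definition edom {R : realType} {m : nat} (f : 'cV[R]_m -> \bar R) : set 'cV[R]_m :=
  [set u | (f u < +oo)%E].

Definition ext_convex {R : realType} {m : nat} (f : 'cV[R]_m -> \bar R) : Prop :=
  (forall u, f u != -oo%E) /\
  forall (x y : 'cV[R]_m) (t : R), 0 < t < 1 ->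
    (f (t *: x + (1 - t) *: y)%R <= t%:E * f x + (1 - t)%:E * f y)%E.

Definition ext_differentiable_at {R : realType} {m : nat} (f : 'cV[R]_m -> \bar R)
    (u : 'cV[R]_m) : Prop :=
  (\forall v \near u, f v \is a fin_num) /\ differentiable (freal f) u.

Definition LfA {R : realType} {m n : nat} (f : 'cV[R]_m -> \bar R) (A : 'M[R]_(m, n)) : \bar R :=
  ereal_sup [set r%:E | r in
    [set r : R | exists u : 'cV[R]_m, exists x : 'cV[R]_n,
       [/\ convcols A u, stdsimplex n x, ~ Zfiber A u x &
        r = 2 * (freal f (A *m x) - freal f u - 'd (freal f) u (A *m x - u))
            / (eucl_dist x (Zfiber A u)) ^+ 2]]].

(* f^star = min_{x in stdsimplex} f(Ax) (written as an infimum; it is attained) *)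
Definition fstar {R : realType} {m n : nat} (f : 'cV[R]_m -> \bar R) (A : 'M[R]_(m, n)) : R :=
  inf [set r | exists2 x, stdsimplex n x & r = freal f (A *m x)].

Definition Zstar {R : realType} {m n : nat} (f : 'cV[R]_m -> \bar R) (A : 'M[R]_(m, n))
    : set 'cV[R]_n :=
  [set z | stdsimplex n z /\ freal f (A *m z) = fstar f A].

Definition mustar {R : realType} {m n : nat} (f : 'cV[R]_m -> \bar R) (A : 'M[R]_(m, n)) : \bar R :=
  ereal_inf [set r%:E | r in
    [set r : R | exists x : 'cV[R]_n,
       [/\ stdsimplex n x, ~ Zstar f A x &
        r = 2 * (freal f (A *m x) - fstar f A) / (eucl_dist x (Zstar f A)) ^+ 2]]].

(* The rate_factor factor min{ mu^star/(4L), 1/2 }, with the conventions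
   mu^star/(4L) = +oo when L = 0 or mu^star = +oo (0 < mu^star, L finite assumed). *)
Definition rate_factor {R : realType} {m n : nat} (f : 'cV[R]_m -> \bar R) (A : 'M[R]_(m, n)) : R :=
  if (mustar f A \is a fin_num) && (0 < fine (LfA f A))
  then Num.min (fine (mustar f A) / (4 * fine (LfA f A))) (1 / 2)
  else 1 / 2.

Definition step_obj {R : realType} {m n : nat} (f : 'cV[R]_m -> \bar R) (A : 'M[R]_(m, n))
    (L : R) (xk x : 'cV[R]_n) : R :=
  freal f (A *m xk) + 'd (freal f) (A *m xk) (A *m (x - xk))
  + L / 2 * (eucl_norm (x - xk)) ^+ 2.

From HB Require Import structures.
From mathcomp Require Import all_boot all_order all_algebra.
From mathcomp Require Import all_classical all_reals all_analysis.
From mathcomp Require Import lra ring.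
Import Order.TTheory GRing.Theory Num.Theory.
Import numFieldNormedType.Exports.
Set Implicit Arguments.
Unset Strict Implicit.
Local Open Scope classical_set_scope.
Local Open Scope ring_scope.

(* Write h(y) = f(Ay) - f^star.  By the definition of L_{f,A}, and since x_k lies in
   the fibre Z(Ax_k), the model minimised at step k majorises f o A on the simplex,
   so f(Ax_{k+1}) is at most the model evaluated at any x_k + t (z - x_k) with
   z in Z^star.  The gradient inequality of convexity bounds that value by
   (1 - t) h(x_k) + L t^2/2 |x_k - z|^2, hence by the same expression with
   dist(x_k, Z^star), and quadratic growth, mu^star/2 dist^2 <= h(x_k), then
   gives h(x_{k+1}) <= (1 - t + L t^2 / mu^star) h(x_k) for every t in [0, 1];
   t = min(mu^star / (2 L), 1) yields the rate. *)

Section EuclideanDistance.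
Variables (R : realType) (n : nat).
Implicit Types (x z v : 'cV[R]_n) (S : set 'cV[R]_n).

Lemma stdsimplex_convex (a b : 'cV[R]_n) (t : R) :
  stdsimplex n a -> stdsimplex n b -> 0 <= t <= 1 ->
  stdsimplex n (t *: a + (1 - t) *: b).
Proof.
move=> [a0 a1] [b0 b1] /andP[t0 t1]; split.
  by move=> i; rewrite !mxE addr_ge0 // mulr_ge0 // subr_ge0.
rewrite (eq_bigr (fun i => t * a i 0 + (1 - t) * b i 0)); last by move=> i _; rewrite !mxE.
by rewrite big_split /= -!mulr_sumr a1 b1 !mulr1 addrC subrK.
Qed.

Lemma eucl_norm_ge0 v : 0 <= eucl_norm v.
Proof. exact: sqrtr_ge0. Qed.

Lemma eucl_norm_sqr v : eucl_norm v ^+ 2 = \sum_i v i 0 ^+ 2.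
Proof. by rewrite sqr_sqrtr // sumr_ge0 // => i _; exact: sqr_ge0. Qed.

Lemma eucl_normZ_sqr (t : R) v : eucl_norm (t *: v) ^+ 2 = t ^+ 2 * eucl_norm v ^+ 2.
Proof. by rewrite !eucl_norm_sqr mulr_sumr; apply: eq_bigr => i _; rewrite mxE exprMn. Qed.

Lemma eucl_norm0 : eucl_norm (0 : 'cV[R]_n) = 0.
Proof. by rewrite /eucl_norm big1 ?sqrtr0 // => i _; rewrite mxE expr0n. Qed.

Lemma eucl_norm_coord v i : `|v i 0| <= eucl_norm v.
Proof.
rewrite -sqrtr_sqr ler_sqrt; last by rewrite sumr_ge0 // => j _; exact: sqr_ge0.
by rewrite (bigD1 i) //= lerDl sumr_ge0 // => j _; exact: sqr_ge0.
Qed.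

Lemma eucl_dist_le x z S : S z -> eucl_dist x S <= eucl_norm (x - z).
Proof.
move=> Sz; apply: ge_inf; last by exists z.
by exists 0 => _ [y _ ->]; exact: eucl_norm_ge0.
Qed.

Lemma eucl_dist_ge0 x S : S !=set0 -> 0 <= eucl_dist x S.
Proof.
move=> [z Sz]; apply: lb_le_inf; first by exists (eucl_norm (x - z)), z.
by move=> _ [y _ ->]; exact: eucl_norm_ge0.
Qed.

Lemma eucl_dist_sqr_glb x S (c : R) : S !=set0 -> 0 <= c ->
  (forall z, S z -> c <= eucl_norm (x - z) ^+ 2) -> c <= eucl_dist x S ^+ 2.
Proof.
move=> [z0 Sz0] c0 lec.
have sqrt_le : Num.sqrt c <= eucl_dist x S.
  apply: lb_le_inf; first by exists (eucl_norm (x - z0)), z0.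
  move=> _ [z Sz ->].
  by rewrite -(ger0_norm (eucl_norm_ge0 _)) -sqrtr_sqr ler_sqrt ?sqr_ge0 ?lec.
rewrite -(sqr_sqrtr c0) ler_sqr ?nnegrE ?sqrtr_ge0 //.
by apply: eucl_dist_ge0; exists z0.
Qed.

Lemma eucl_dist_sqr_bound x S (a b K : R) : S !=set0 -> 0 <= K ->
  (forall z, S z -> a <= b + K * eucl_norm (x - z) ^+ 2) ->
  a <= b + K * eucl_dist x S ^+ 2.
Proof.
move=> [z0 Sz0] K0 leab.
have [ab|ba] := lerP a b.
  by apply: (le_trans ab); rewrite lerDl mulr_ge0 ?sqr_ge0.
have Kpos : 0 < K.
  rewrite lt_def K0 andbT; apply/eqP => K_eq0.
  by have := leab z0 Sz0; rewrite K_eq0 mul0r addr0; lra.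
suff : (a - b) / K <= eucl_dist x S ^+ 2 by rewrite ler_pdivrMr // mulrC; lra.
apply: eucl_dist_sqr_glb; first by exists z0.
  by rewrite divr_ge0 ?subr_ge0 ?ltW.
by move=> z Sz; rewrite ler_pdivrMr // mulrC; have := leab z Sz; lra.
Qed.

End EuclideanDistance.

Section Fiber.
Variables (R : realType) (m n : nat) (A : 'M[R]_(m, n)).

Lemma convcols_convex (u w : 'cV[R]_m) (t : R) :
  convcols A u -> convcols A w -> 0 <= t <= 1 -> convcols A (t *: w + (1 - t) *: u).
Proof.
move=> [a sa <-] [b sb <-] t01; exists (t *: b + (1 - t) *: a).
  exact: stdsimplex_convex.
by rewrite mulmxDr !scalemxAr.
Qed.

Lemma mulmx_coord_le (v : 'cV[R]_n) i :
  `|(A *m v) i 0| <= (\sum_j `|A i j|) * eucl_norm v.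
Proof.
rewrite mxE mulr_suml; apply: (le_trans (ler_norm_sum _ _ _)).
by apply: ler_sum => j _; rewrite normrM ler_wpM2l ?eucl_norm_coord.
Qed.

Lemma eucl_dist_Zfiber_gt0 (u : 'cV[R]_m) (x z0 : 'cV[R]_n) :
  stdsimplex n x -> ~ Zfiber A u x -> Zfiber A u z0 ->
  0 < eucl_dist x (Zfiber A u).
Proof.
move=> sx xZ Zz0.
have [i Axi] : exists i, (A *m x) i 0 != u i 0.
  apply: contrapT => Axu; apply: xZ; split => //.
  apply/matrixP => i j; rewrite (ord1 j); apply/eqP.
  by apply: contrapT => /negP Axi; apply: Axu; exists i.
set c := `|(A *m x) i 0 - u i 0|; set K := 1 + \sum_j `|A i j|.
have c_gt0 : 0 < c by rewrite normr_gt0 subr_eq0.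
have K_gt0 : 0 < K by rewrite ltr_pwDl ?sumr_ge0.
apply: (@lt_le_trans _ _ (c / K)); first by rewrite divr_gt0.
apply: lb_le_inf; first by exists (eucl_norm (x - z0)), z0.
move=> _ [z [_ Az] ->]; rewrite ler_pdivrMr //.
have Axz : (A *m (x - z)) i 0 = (A *m x) i 0 - u i 0 by rewrite -Az mulmxBr !mxE.
have := mulmx_coord_le (x - z) i; rewrite Axz -/c.
have := eucl_norm_ge0 (x - z); have : 0 <= \sum_j `|A i j| by rewrite sumr_ge0.
rewrite /K; nra.
Qed.

End Fiber.

Section ExtendedBounds.
Variable R : realType.
Implicit Types (S : set R) (s : R).
Local Open Scope ereal_scope.

Lemma le_fine_ereal_sup S s : S s -> ereal_sup [set x%:E | x in S] < +oo ->
  (s <= fine (ereal_sup [set x%:E | x in S]))%R.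
Proof.
move=> Ss; have : s%:E <= ereal_sup [set x%:E | x in S] by apply: ereal_sup_ubound; exists s.
by case: ereal_sup => [r| |] //=; rewrite lee_fin.
Qed.

Lemma fine_ereal_sup_ge0 S : (forall s, S s -> 0 <= s)%R ->
  (0 <= fine (ereal_sup [set x%:E | x in S]))%R.
Proof.
move=> S_ge0; have [->|/set0P[s Ss]] := eqVneq S set0.
  by rewrite image_set0 ereal_sup0.
have : s%:E <= ereal_sup [set x%:E | x in S] by apply: ereal_sup_ubound; exists s.
by case: ereal_sup => [r| |] //=; rewrite lee_fin; exact/le_trans/S_ge0.
Qed.

Lemma ereal_inf_le_fin S s (mu : R) : ereal_inf [set x%:E | x in S] = mu%:E -> S s ->
  (mu <= s)%R.
Proof.
move=> infE Ss; rewrite -lee_fin -infE.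
by apply: ereal_inf_lbound; exists s.
Qed.

Lemma ereal_inf_pinfty_empty S s : ereal_inf [set x%:E | x in S] = +oo -> ~ S s.
Proof.
move=> infE Ss; have : ereal_inf [set x%:E | x in S] <= s%:E.
  by apply: ereal_inf_lbound; exists s.
by rewrite infE.
Qed.

End ExtendedBounds.

Section ConvexOnHull.
Variables (R : realType) (m n : nat) (A : 'M[R]_(m, n)) (f : 'cV[R]_m -> \bar R).
Hypothesis f_convex : ext_convex f.
Hypothesis hull_dom : convcols A `<=` edom f.

Lemma freal_convcolsE u : convcols A u -> f u = (freal f u)%:E.
Proof.
by move=> /hull_dom fu; rewrite fineK // fin_numE f_convex.1 lt_eqF.
Qed.

Lemma freal_convex u w (t : R) : convcols A u -> convcols A w -> 0 < t < 1 ->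
  freal f (t *: w + (1 - t) *: u) <= t * freal f w + (1 - t) * freal f u.
Proof.
move=> hu hw t01; have := f_convex.2 w u t t01.
have t01' : 0 <= t <= 1 by case/andP: t01 => /ltW -> /ltW ->.
have hwu := convcols_convex hu hw t01'.
by rewrite !freal_convcolsE // -!EFinM -EFinD lee_fin.
Qed.

Lemma convex_diff_le u w : convcols A u -> convcols A w ->
  differentiable (freal f) u -> 'd (freal f) u (w - u) <= freal f w - freal f u.
Proof.
move=> hu hw df; rewrite -deriveE //.
rewrite /derive cvg_at_rightE; last exact: diff_derivable.
apply: limr_le.
  by apply: cvgP; apply: cvg_dnbhs_at_right; exact: diff_derivable.
near=> t.
have t_gt0 : 0 < t by near: t; exact: nbhs_right_gt.
have t_lt1 : t < 1 by near: t; exact: nbhs_right_lt.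
have -> : (freal f \o shift u) (t *: (w - u)) = freal f (t *: w + (1 - t) *: u).
  by rewrite /= scalerBr scalerBl scale1r addrA addrAC.
have := freal_convex hu hw (introT andP (conj t_gt0 t_lt1)).
rewrite /GRing.scale /= ler_pdivrMl //; lra.
Unshelve. all: by end_near.
Qed.

Lemma LfA_ge0 : (forall u, convcols A u -> differentiable (freal f) u) ->
  0 <= fine (LfA f A).
Proof.
move=> df; apply: fine_ereal_sup_ge0 => _ [u [y [hu sy _ ->]]].
have hy : convcols A (A *m y) by exists y.
have := convex_diff_le hu hy (df u hu).
by move=> le; rewrite divr_ge0 ?sqr_ge0 // mulr_ge0 //; lra.
Qed.

Lemma step_obj_segment_le (L t : R) (x z : 'cV[R]_n) :
  stdsimplex n x -> stdsimplex n z -> differentiable (freal f) (A *m x) -> 0 <= t ->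
  step_obj f A L x (t *: z + (1 - t) *: x)
  <= (1 - t) * freal f (A *m x) + t * freal f (A *m z)
     + L * t ^+ 2 / 2 * eucl_norm (x - z) ^+ 2.
Proof.
move=> sx sz df t0.
have hx : convcols A (A *m x) by exists x.
have hz : convcols A (A *m z) by exists z.
rewrite /step_obj.
have -> : t *: z + (1 - t) *: x - x = (- t) *: (x - z).
  by apply/matrixP => i j; rewrite !mxE; ring.
rewrite eucl_normZ_sqr sqrrN -scalemxAr mulmxBr scaleNr -scalerN opprB linearZ /=.
have := ler_wpM2l t0 (convex_diff_le hx hz df).
rewrite /GRing.scale /=; lra.
Qed.

End ConvexOnHull.

Section GradientStep.
Variables (R : realType) (m n : nat) (A : 'M[R]_(m, n)) (f : 'cV[R]_m -> \bar R).
Local Notation L := (fine (LfA f A)).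

Lemma freal_le_step_obj (x y : 'cV[R]_n) : (LfA f A < +oo)%E -> 0 <= L ->
  stdsimplex n x -> stdsimplex n y -> freal f (A *m y) <= step_obj f A L x y.
Proof.
move=> L_fin L_ge0 sx sy; rewrite /step_obj mulmxBr.
have quad_ge0 : 0 <= L / 2 * eucl_norm (y - x) ^+ 2.
  by rewrite mulr_ge0 ?sqr_ge0 ?divr_ge0.
have [[_ Ayx]|yZ] := pselect (Zfiber A (A *m x) y).
  by rewrite Ayx subrr linear0 addr0; lra.
have xZ : Zfiber A (A *m x) x by [].
have D_gt0 := eucl_dist_Zfiber_gt0 sy yZ xZ.
have D_le := eucl_dist_le y xZ.
set D := eucl_dist y _ in D_gt0 D_le.
have G_le : 2 * (freal f (A *m y) - freal f (A *m x)
                - 'd (freal f) (A *m x) (A *m y - A *m x)) / D ^+ 2 <= L.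
  exact: le_fine_ereal_sup (ex_intro _ (A *m x) (ex_intro _ y
    (And4 (ex_intro2 _ _ x sx erefl) sy yZ erefl))) L_fin.
rewrite ler_pdivrMr ?exprn_gt0 // in G_le.
have : D ^+ 2 <= eucl_norm (y - x) ^+ 2.
  by rewrite ler_sqr ?nnegrE ?eucl_norm_ge0 ?(ltW D_gt0).
move=> /(ler_wpM2l L_ge0); lra.
Qed.

End GradientStep.

Section QuadraticGrowth.
Variables (R : realType) (m n : nat) (A : 'M[R]_(m, n)) (f : 'cV[R]_m -> \bar R).

Lemma mustar_pinfty_Zstar (y : 'cV[R]_n) :
  mustar f A = +oo%E -> stdsimplex n y -> Zstar f A y.
Proof.
move=> mu_oo sy; apply: contrapT => yZ.
exact: ereal_inf_pinfty_empty mu_oo (ex_intro _ y (And3 sy yZ erefl)).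
Qed.

Lemma mustar_quadratic_growth (mu : R) (y : 'cV[R]_n) :
  mustar f A = mu%:E -> 0 < mu -> stdsimplex n y ->
  Zstar f A !=set0 /\
  mu / 2 * eucl_dist y (Zstar f A) ^+ 2 <= freal f (A *m y) - fstar f A.
Proof.
move=> muE mu_gt0 sy; have [yZ|yZ] := pselect (Zstar f A y).
  have d0 : eucl_dist y (Zstar f A) = 0.
    apply/eqP; rewrite eq_le eucl_dist_ge0 ?andbT; last by exists y.
    by have := eucl_dist_le y yZ; rewrite subrr eucl_norm0.
  by rewrite d0 yZ.2 subrr expr0n mulr0; split => //; exists y.
set d := eucl_dist y (Zstar f A).
have mu_le : mu <= 2 * (freal f (A *m y) - fstar f A) / d ^+ 2.
  exact: ereal_inf_le_fin muE (ex_intro _ y (And3 sy yZ erefl)).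
have d_neq0 : d != 0.
  by apply/eqP => d0; move: mu_le; rewrite d0 expr0n /= invr0 mulr0; lra.
have Z_ne : Zstar f A !=set0.
  (* the infimum of the empty set is 0 *)
  apply: contrapT => Z_empty; move/eqP: d_neq0; apply; rewrite /d /eucl_dist.
  suff -> : [set r | exists2 z, Zstar f A z & r = eucl_norm (y - z)] = set0.
    exact: inf0.
  by apply/seteqP; split => // r [z Zz _]; apply: Z_empty; exists z.
have d_gt0 : 0 < d by rewrite lt_def d_neq0 eucl_dist_ge0.
by split => //; rewrite ler_pdivlMr ?exprn_gt0 // in mu_le; lra.
Qed.

End QuadraticGrowth.

Lemma le_quadratic_rate (R : realFieldType) (L mu h h' : R) :
  0 <= L -> 0 < mu -> 0 <= h ->
  (forall t, 0 <= t <= 1 -> h' <= (1 - t + L * t ^+ 2 / mu) * h) ->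
  h' <= (1 - (if 0 < L then Num.min (mu / (4 * L)) (1 / 2) else 1 / 2)) * h.
Proof.
move=> L_ge0 mu_gt0 h_ge0 bound.
have := bound 1; rewrite ler01 lexx subrr add0r expr1n mulr1 => /(_ isT) at1.
have [L_gt0|L_le0] := ltP 0 L; last first.
  have L0 : L = 0 by apply: le_anti; rewrite L_le0 L_ge0.
  by move: at1; rewrite L0 !mul0r; lra.
have [le4|gt4] := leP (mu / (4 * L)) (1 / 2).
  have t01 : 0 <= mu / (2 * L) <= 1.
    rewrite divr_ge0 ?(ltW mu_gt0) ?mulr_ge0 ?(ltW L_gt0) //= ler_pdivrMr ?mulr_gt0 //.
    by move: le4; rewrite ler_pdivrMr ?mulr_gt0 //; lra.
  suff <- : 1 - mu / (2 * L) + L * (mu / (2 * L)) ^+ 2 / mu = 1 - mu / (4 * L).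
    exact: bound.
  by field; rewrite !gt_eqF.
have : L / mu <= 1 / 2.
  by move: gt4; rewrite ltr_pdivlMr ?mulr_gt0 // ler_pdivrMr //; lra.
by move=> /(ler_wpM2r h_ge0); lra.
Qed.

Lemma rate_factor_le_half (R : realType) (m n : nat) (A : 'M[R]_(m, n))
  (f : 'cV[R]_m -> \bar R) : rate_factor f A <= 1 / 2.
Proof. by rewrite /rate_factor; case: ifP => // _; rewrite ge_min lexx orbT. Qed.

Section Contraction.
Variables (R : realType) (m n : nat) (A : 'M[R]_(m, n)) (f : 'cV[R]_m -> \bar R).
Hypothesis f_convex : ext_convex f.
Hypothesis hull_dom : convcols A `<=` edom f.
Hypothesis f_diff : forall u, convcols A u -> differentiable (freal f) u.
Hypothesis L_fin : (LfA f A < +oo)%E.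
Hypothesis mu_gt0 : (0 < mustar f A)%E.
Local Notation L := (fine (LfA f A)).
Local Notation gap y := (freal f (A *m y) - fstar f A).

Lemma gradient_step_contraction (x x' : 'cV[R]_n) :
  stdsimplex n x -> stdsimplex n x' ->
  (forall y, stdsimplex n y -> step_obj f A L x x' <= step_obj f A L x y) ->
  gap x' <= (1 - rate_factor f A) * gap x.
Proof.
move=> sx sx' x'_min.
have L_ge0 := LfA_ge0 f_convex hull_dom f_diff.
have descent y : stdsimplex n y -> freal f (A *m x') <= step_obj f A L x y.
  by move=> sy; apply: le_trans (x'_min y sy); exact: freal_le_step_obj.
case muE: (mustar f A) mu_gt0 => [mu| |] // mu_gt0'; last first.
  by rewrite (mustar_pinfty_Zstar muE sx).2 (mustar_pinfty_Zstar muE sx').2 subrr mulr0.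
rewrite lte_fin in mu_gt0'.
have [Z_ne growth] := mustar_quadratic_growth muE mu_gt0' sx.
set d := eucl_dist x _ in growth.
rewrite /rate_factor muE /=; apply: le_quadratic_rate => // [|t /andP[t_ge0 t_le1]].
  by apply: le_trans growth; rewrite mulr_ge0 ?sqr_ge0 ?divr_ge0 ?ltW.
have interpolation : gap x' <= (1 - t) * gap x + L * t ^+ 2 / 2 * d ^+ 2.
  apply: eucl_dist_sqr_bound => // [|z [sz Az]].
    by rewrite mulr_ge0 ?divr_ge0 ?mulr_ge0 ?sqr_ge0.
  have := descent _ (stdsimplex_convex sz sx (introT andP (conj t_ge0 t_le1))).
  have hx : convcols A (A *m x) by exists x.
  have := step_obj_segment_le f_convex hull_dom L sx sz (f_diff hx) t_ge0.
  rewrite Az; lra.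
have K_ge0 : 0 <= L * t ^+ 2 / mu by rewrite divr_ge0 ?mulr_ge0 ?sqr_ge0 ?(ltW mu_gt0').
have := ler_wpM2l K_ge0 growth.
have -> : L * t ^+ 2 / mu * (mu / 2 * d ^+ 2) = L * t ^+ 2 / 2 * d ^+ 2.
  by field; rewrite gt_eqF.
lra.
Qed.

End Contraction.

Unset Implicit Arguments.

Theorem proposition4 (R : realType) (m n : nat) (A : 'M[R]_(m, n))
  (f : 'cV[R]_m -> \bar R) (x : nat -> 'cV[R]_n) :
  (exists i j : 'I_n, col i A != col j A) ->
  ext_convex f ->
  (forall u, convcols A u -> ext_differentiable_at f u) ->
  convcols A `<=` edom f ->
  (LfA f A < +oo)%E -> (0 < mustar f A)%E ->
  stdsimplex n (x 0%N) ->
  (forall k : nat, stdsimplex n (x k.+1) /\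
     forall y, stdsimplex n y ->
       step_obj f A (fine (LfA f A)) (x k) (x k.+1)
       <= step_obj f A (fine (LfA f A)) (x k) y) ->
  forall k : nat,
    freal f (A *m x k) - fstar f A
    <= (1 - rate_factor f A) ^+ k * (freal f (A *m x 0%N) - fstar f A).
Proof.
move=> _ f_convex f_diff hull_dom L_fin mu_gt0 sx0 x_step.
have sx k : stdsimplex n (x k) by case: k => [|k] //; exact: (x_step k).1.
have contraction k := gradient_step_contraction f_convex hull_dom
  (fun u hu => (f_diff u hu).2) L_fin mu_gt0 (sx k) (sx k.+1) (x_step k).2.
have rate_ge0 : 0 <= 1 - rate_factor f A by have := rate_factor_le_half A f; lra.
elim=> [|k IH]; first by rewrite expr0 mul1r.
by apply: le_trans (contraction k) _; rewrite exprS -mulrA ler_wpM2l.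
Qed.
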